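(* Let $(P,e)$, $P\in\mathcal{T}_k$, be a friendly tree pattern, let $\sigma(P,e)=(\tau(P),C)$ be its associated mesh pattern, let $i$ be the position of the largest value $k$ in $\tau(P)$, and let $\sigma^-(P,e)=(\tau(P),C\setminus\{(i-1,k)\})$. Then for every $n\ge 0$, $S_n(231,\sigma(P,e))=S_n(231,\sigma^-(P,e))$.
   Context: Binary trees: $\mathcal{T}_k$ is the set of binary trees on $k$ vertices labeled $1,\dots,k$ by the search tree property. $c_L(i),c_R(i),p(i)$: left child, right child, parent ($\varepsilon$ if nonexistent); $r(P)$ root; $P(i)$ subtree rooted at $i$; $L(i),R(i)$ subtrees rooted at $c_L(i),c_R(i)$. $B_R(i)=\{i,c_R(i),c_R^2(i),\dots\}$ is the vertex set of the right branch starting at $i$; $B_R^-(i)$ is $B_R(i)$ minus its last vertex. A tree pattern is $(P,e)$ with $e\colon[k]\setminus\{r(P)\}\to\{0,1\}$. Preorder: $\tau(\varepsilon)=$ empty, $\tau(P)=(r(P),\tau(L(P)),\tau(R(P)))$. $(P,e)$ is friendly if: (i) $p(k)\neq\varepsilon$ and $c_L(k)\neq\varepsilon$; (ii) $e(j)=0$ for all $j\in B_R^-(r(P))\setminus\{r(P)\}$; (iii) if $e(k)=1$ then $e(c_L(k))=0$. Mesh patterns: $(\tau,C)$ with $\tau\in S_k$, $C\subseteq\{0,\dots,k\}^2$; $\pi\in S_n$ contains it if there are indices $\nu_1<\dots<\nu_k$ with $\pi(\nu_1),\dots,\pi(\nu_k)$ order-isomorphic to $\tau$ and, with $\lambda_1<\dots<\lambda_k$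 these values sorted and $\nu_0=\lambda_0=0$, $\nu_{k+1}=\lambda_{k+1}=n+1$, no point $(j,\pi(j))$ lies in $(\nu_a,\nu_{a+1})\times(\lambda_b,\lambda_{b+1})$ for $(a,b)\in C$. Classical patterns are the case $C=\emptyset$. $S_n(\sigma_1,\sigma_2)$ is the set of permutations of $[n]$ avoiding both. $\sigma(P,e)$: with $\rho=\tau(P)^{-1}$, $C_j=\{(\rho(j)-1,m):m\in B_R^-(j)\}$ for $j\in[k]$; for non-root $j$, $C_j'=\emptyset$ if $e(j)=0$ and $C_j'=\{(\rho(j)-1,\min P(j)-1),(\rho(j)-1,\max P(j))\}$ if $e(j)=1$; $\sigma(P,e)=(\tau(P),\bigcup_jC_j\cup\bigcup_jC_j')$. *)

From mathcomp Require Import all_boot.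
Set Implicit Arguments. Unset Strict Implicit. Unset Printing Implicit Defensive.

(* ---------- Binary trees, labeled 1..k in in-order (search tree property) ---------- *)
Inductive btree := BLeaf | BNode of btree & btree.

Fixpoint bsize (t : btree) : nat :=
  match t with BLeaf => 0 | BNode l r => (bsize l + bsize r).+1 end.

(* Label of the root of subtree [t] whose labels are o+1 .. o+bsize t. *)
Definition root_at (t : btree) (o : nat) : option nat :=
  match t with BLeaf => None | BNode l _ => Some (o + bsize l + 1) end.

(* r(P) (0 for the empty tree, never used there) *)
Definition troot (P : btree) : nat := odflt 0 (root_at P 0).

(* The subtree P(j) rooted at label j, together with its label offset o:
   its labels are o+1 .. o + bsize (subtree). *)
Fixpoint find_sub (t : btree) (o j : nat) : option (btree * nat) :=
  match t with
  | BLeaf => None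
  | BNode l r =>
      let rt := o + bsize l + 1 in
      if j == rt then Some (t, o)
      else if j < rt then find_sub l o j else find_sub r rt j
  end.

Definition subP (P : btree) (j : nat) := find_sub P 0 j.

(* c_L(j), c_R(j)  (None = epsilon) *)
Definition cL (P : btree) (j : nat) : option nat :=
  match subP P j with Some (BNode l _, o) => root_at l o | _ => None end.
Definition cR (P : btree) (j : nat) : option nat :=
  match subP P j with Some (BNode _ r, _) => root_at r j | _ => None end.

(* p(j) <> epsilon  iff  j is a vertex other than the root *)
Definition has_parent (P : btree) (j : nat) : bool :=
  (0 < j <= bsize P) && (j != troot P).

Fixpoint rbranch (t : btree) (o : nat) : seq nat :=
  match t with
  | BLeaf => [::]
  | BNode l r => let rt := o + bsize l + 1 in rt :: rbranch r rt
  end.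

Definition BR (P : btree) (j : nat) : seq nat :=
  match subP P j with Some (t, o) => rbranch t o | None => [::] end.
Definition BRm (P : btree) (j : nat) : seq nat :=
  let s := BR P j in take (size s).-1 s.

(* preorder tau(P), as a sequence of labels = one-line notation of a permutation *)
Fixpoint preorder (t : btree) (o : nat) : seq nat :=
  match t with
  | BLeaf => [::]
  | BNode l r => let rt := o + bsize l + 1 in rt :: preorder l o ++ preorder r rt
  end.
Definition tau (P : btree) : seq nat := preorder P 0.

(* ---------- friendly tree patterns; e : labels -> {0,1} (false = 0, true = 1);
   only the values of e on [k] \ {r(P)} are ever used ---------- *)
Definition friendly (P : btree) (e : nat -> bool) : Prop :=
  let k := bsize P in
  [/\ has_parent P k /\ cL P k <> None,
      (forall j, j \in BRm P (troot P) -> j != troot P -> e j = false)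
    & (e k -> forall c, cL P k = Some c -> e c = false)].

(* rho(j) - 1 = 0-based index of j in tau(P) *)
Definition shadeC (P : btree) (e : nat -> bool) (j : nat) : seq (nat * nat) :=
  let a := index j (tau P) in
  [seq (a, m) | m <- BRm P j] ++
  (if (j != troot P) && e j then
     match subP P j with
     | Some (t, o) => [:: (a, o); (a, o + bsize t)]   (* min P(j) - 1, max P(j) *)
     | None => [::]
     end
   else [::]).

Definition meshC (P : btree) (e : nat -> bool) : seq (nat * nat) :=
  flatten [seq shadeC P e j | j <- iota 1 (bsize P)].

(* sigma^-: remove the box (i-1, k), i = position of k in tau(P) *)
Definition meshC_minus (P : btree) (e : nat -> bool) : seq (nat * nat) :=
  [seq c <- meshC P e | c != (index (bsize P) (tau P), bsize P)].

(* pi (a permutation of [n] in one-line notation, values 1..n) contains the mesh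
   pattern (tp, C), tp a permutation of [k] in one-line notation. Positions are 1-based. *)
Definition mesh_contains (pi : seq nat) (tp : seq nat) (C : seq (nat * nat)) : Prop :=
  let n := size pi in
  let k := size tp in
  exists nu : seq nat,
    [/\ size nu = k, sorted ltn nu, all (fun x => 0 < x <= n) nu,
        (let vals := [seq nth 0 pi x.-1 | x <- nu] in
         forall a b, a < k -> b < k ->
           (nth 0 vals a < nth 0 vals b) = (nth 0 tp a < nth 0 tp b))
      & (let vals := [seq nth 0 pi x.-1 | x <- nu] in
         let nuE := 0 :: rcons nu n.+1 in
         let lamE := 0 :: rcons (sort leq vals) n.+1 in
         forall ab, ab \in C -> forall j, 0 < j <= n ->
           ~ ((nth 0 nuE ab.1 < j < nth 0 nuE ab.1.+1) /\
              (nth 0 lamE ab.2 < nth 0 pi j.-1 < nth 0 lamE ab.2.+1)))].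

Definition mesh_avoids pi tp C := ~ mesh_contains pi tp C.

Definition p231 : seq nat := [:: 2; 3; 1].

Definition in_Sn_231 (n : nat) (tp : seq nat) (C : seq (nat * nat)) (pi : seq nat) : Prop :=
  perm_eq pi (iota 1 n) /\ mesh_avoids pi p231 [::] /\ mesh_avoids pi tp C.

From mathcomp Require Import all_boot zify.

Set Implicit Arguments.
Unset Strict Implicit.
Unset Printing Implicit Defensive.

(* Let a be the 0-based position of k in tau(P), so that the box (a, k) lies
   just left of and above the point playing k.  Given an occurrence of
   sigma^-(P,e) in a 231-avoiding permutation whose box (a, k) is non-empty,
   let the highest point of that box play k instead.  The box (a, k) is then
   empty by maximality, and the only other boxes that grow are those of column
   a+1, shaded (as e(c_L(k)) = 0) only in rows c_L(k), ..., k-2, and those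
   of row k-1, shaded only in columns right of c_L(k) in tau(P).  A point in the
   new part of such a box would form a 231 with the old occurrence.  If
   e(k) = 0 the box (a, k) is not shaded at all. *)

Lemma preorder_node l r o : preorder (BNode l r) o =
  (o + bsize l + 1 :: preorder l o) ++ preorder r (o + bsize l + 1).
Proof. by []. Qed.

Lemma perm_preorder t o : perm_eq (preorder t o) (iota o.+1 (bsize t)).
Proof.
elim: t o => [|l IHl r IHr] o //; rewrite [bsize _]/= -addnS iotaD.
rewrite (_ : o.+1 + bsize l = o + bsize l + 1) /=; last lia.
by rewrite perm_sym -cat1s perm_catCA perm_cons perm_sym perm_cat.
Qed.

Lemma mem_preorder t o x : (x \in preorder t o) = (o < x <= o + bsize t).
Proof. by rewrite (perm_mem (perm_preorder t o)) mem_iota; apply/idP/idP; lia. Qed.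

Lemma uniq_preorder t o : uniq (preorder t o).
Proof. by rewrite (perm_uniq (perm_preorder t o)) iota_uniq. Qed.

Lemma size_preorder t o : size (preorder t o) = bsize t.
Proof. by rewrite (perm_size (perm_preorder t o)) size_iota. Qed.

Lemma find_sub_root l r o :
  find_sub (BNode l r) o (o + bsize l + 1) = Some (BNode l r, o).
Proof. by rewrite /= eqxx. Qed.

Lemma find_sub_left l r o j :
  j < o + bsize l + 1 -> find_sub (BNode l r) o j = find_sub l o j.
Proof. by move=> lt_j; rewrite /= (ltn_eqF lt_j) lt_j. Qed.

Lemma find_sub_right l r o j :
  o + bsize l + 1 < j -> find_sub (BNode l r) o j = find_sub r (o + bsize l + 1) j.
Proof. by move=> gt_j; rewrite [LHS]/= (gtn_eqF gt_j) ltnNge (ltnW gt_j). Qed.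

Lemma find_subP t o j s o' : find_sub t o j = Some (s, o') ->
  [/\ o <= o', o' + bsize s <= o + bsize t &
      exists l r, s = BNode l r /\ j = o' + bsize l + 1].
Proof.
elim: t o => [|l IHl r IHr] o //; rewrite [bsize (BNode l r)]/=.
have [lt_j | gt_j | ->] := ltngtP j (o + bsize l + 1).
- by rewrite find_sub_left // => /IHl[le_o le_s node]; split=> //; lia.
- by rewrite find_sub_right // => /IHr[le_o le_s node]; split=> //; lia.
- by rewrite find_sub_root => -[<- <-]; split=> //; exists l, r.
Qed.

Lemma find_sub_trans t o j s o' i : find_sub t o j = Some (s, o') ->
  o' < i <= o' + bsize s -> find_sub t o i = find_sub s o' i.
Proof.
elim: t o => [|l IHl r IHr] o //.
have [lt_j | gt_j | ->] := ltngtP j (o + bsize l + 1).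
- rewrite find_sub_left // => found i_in; have [_ le_s _] := find_subP found.
  by rewrite find_sub_left; [exact: IHl | lia].
- rewrite find_sub_right // => found i_in; have [le_o _ _] := find_subP found.
  by rewrite find_sub_right; [exact: IHr | lia].
- by rewrite find_sub_root => -[<- <-].
Qed.

Lemma find_sub_max t o : 0 < bsize t -> exists l o' X,
  find_sub t o (o + bsize t) = Some (BNode l BLeaf, o') /\
  preorder t o = X ++ preorder (BNode l BLeaf) o'.
Proof.
elim: t o => [|l _ r IHr] o // _.
case: r IHr => [|rl rr] IHr.
  by exists l, o, [::]; rewrite -find_sub_root /= addn0 addnS addn1.
have [l' [o' [X [found pre]]]] := IHr (o + bsize l + 1) isT.
exists l', o', (o + bsize l + 1 :: preorder l o ++ X).
have -> : o + bsize (BNode l (BNode rl rr)) = o + bsize l + 1 + bsize (BNode rl rr).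
  by rewrite /=; lia.
rewrite find_sub_right ?found; last by rewrite /=; lia.
by rewrite /= in pre *; rewrite pre catA.
Qed.

Lemma find_sub_rbranch l r o m :
  m \in take (size (rbranch (BNode l r) o)).-1 (rbranch (BNode l r) o) ->
  o + bsize l < m /\
  exists l' rl rr o', find_sub (BNode l r) o m = Some (BNode l' (BNode rl rr), o').
Proof.
elim: r l o => [|rl _ rr IHrr] l o //.
rewrite [rbranch _ _]/= [size _]/= [take _ _]/= -/(rbranch (BNode rl rr) _) in_cons.
case/orP=> [/eqP -> | /(IHrr rl) [lt_m found]].
  by split; [lia | exists l, rl, rr, o; rewrite find_sub_root].
by rewrite find_sub_right; [split=> //; lia | lia].
Qed.

(* A subtree whose largest label is the predecessor of the maximum hangs
   below the maximum. *)
Lemma index_preorder_max t o j s o' : find_sub t o j = Some (s, o') ->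
  o' + bsize s = (o + bsize t).-1 ->
  index (o + bsize t) (preorder t o) < index j (preorder t o).
Proof.
elim: t o => [|l _ r IHr] o //.
have [lt_j | gt_j | ->] := ltngtP j (o + bsize l + 1).
- rewrite find_sub_left // => /find_subP[_ le_s _].
  case: r {IHr} => [|rl rr] /=; last by lia.
  by rewrite (gtn_eqF lt_j) addn0 addnS addn1 eqxx.
- rewrite find_sub_right // => found; case: r found IHr => // rl rr found IHr.
  have -> : o + bsize (BNode l (BNode rl rr)) = o + bsize l + 1 + bsize (BNode rl rr).
    by rewrite /=; lia.
  move=> /(IHr _ found); rewrite (preorder_node l) !index_cat !in_cons !mem_preorder.
  by rewrite !ifF ?ltn_add2l //; apply/negbTE; rewrite ?[bsize (BNode _ _)]/=; lia.
- by rewrite find_sub_root => -[<- <-] /=; lia.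
Qed.

Lemma nth_frame (s : seq nat) z i :
  nth 0 (0 :: rcons s z) i =
  if i == 0 then 0 else if i <= size s then nth 0 s i.-1
  else if i == (size s).+1 then z else 0.
Proof. by case: i => [|i] //=; rewrite nth_rcons eqSS. Qed.

Lemma mesh_contains_sub pi tp (C1 C2 : seq (nat * nat)) : {subset C1 <= C2} ->
  mesh_contains pi tp C2 -> mesh_contains pi tp C1.
Proof.
move=> sC12 [nu [? ? ? ? boxes]]; exists nu; split=> // ? ? ? ab /sC12; exact: boxes.
Qed.

Lemma contains_231 pi p1 p2 p3 : 0 < p1 < p2 -> p2 < p3 <= size pi ->
  nth 0 pi p3.-1 < nth 0 pi p1.-1 < nth 0 pi p2.-1 -> mesh_contains pi p231 [::].
Proof.
move=> /andP[p1_gt0 lt12] /andP[lt23 p3_le] /andP[lt31 lt12v].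
exists [:: p1; p2; p3]; split=> //.
- by rewrite /= lt12 lt23.
- by rewrite /= p1_gt0 p3_le; apply/and4P; split=> //; lia.
- by move=> /= [|[|[|?]]] [|[|[|?]]] //= _ _; apply/idP/idP; lia.
Qed.

Definition is_perm_seq (s : seq nat) := perm_eq s (iota 1 (size s)).

Section Occurrence.

Variables (pi tp : seq nat).
Local Notation N := (size pi).
Local Notation k := (size tp).

(* [col nu i] and [row nu r] are the bounds nu_i and lambda_r of the mesh
   condition, with the sentinels 0 and n+1. *)
Definition values (nu : seq nat) := [seq nth 0 pi x.-1 | x <- nu].
Definition col (nu : seq nat) i := nth 0 (0 :: rcons nu N.+1) i.
Definition row (nu : seq nat) r := nth 0 (0 :: rcons (sort leq (values nu)) N.+1) r.
Definition in_box nu (ab : nat * nat) j :=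
  (col nu ab.1 < j < col nu ab.1.+1) &&
  (row nu ab.2 < nth 0 pi j.-1 < row nu ab.2.+1).

Definition occurrence nu :=
  [/\ size nu = k, sorted ltn nu, all (fun x => 0 < x <= N) nu &
      forall b b', b < k -> b' < k ->
        (nth 0 (values nu) b < nth 0 (values nu) b') = (nth 0 tp b < nth 0 tp b')].

Lemma mesh_containsP C : mesh_contains pi tp C <->
  exists2 nu, occurrence nu &
    forall ab, ab \in C -> forall j, 0 < j <= N -> ~~ in_box nu ab j.
Proof.
split=> [[nu [sz srt bnd iso boxes]]|[nu [sz srt bnd iso] boxes]].
  exists nu => [|ab /boxes box j /box nbox]; first by split.
  by apply/negP => /andP[? ?]; apply: nbox.
exists nu; split=> // ? ? ? ab /boxes box j /box /negP nbox [? ?].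
by apply: nbox; apply/andP.
Qed.

Section Positions.

Variable nu : seq nat.
Hypothesis occ : occurrence nu.

Lemma size_values : size (values nu) = k.
Proof. by case: occ => sz _ _ _; rewrite size_map. Qed.

Lemma nth_values b : b < k -> nth 0 (values nu) b = nth 0 pi (nth 0 nu b).-1.
Proof. by case: occ => sz _ _ _ lt_bk; rewrite (nth_map 0) // sz. Qed.

Lemma occ_bound b : b < k -> 0 < nth 0 nu b <= N.
Proof. by case: occ => sz _ /(all_nthP 0) bnd _; rewrite -sz; apply: bnd. Qed.

Lemma occ_lt b b' : b < b' -> b' < k -> nth 0 nu b < nth 0 nu b'.
Proof.
case: occ => sz srt _ _ lt_bb' lt_b'k.
by apply: (sorted_ltn_nth ltn_trans 0 srt) => //; rewrite inE sz; lia.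
Qed.

Lemma col_occ i : 0 < i <= k -> col nu i = nth 0 nu i.-1.
Proof.
case: occ => sz _ _ _ /andP[i_gt0 le_ik].
by rewrite /col nth_frame sz (negbTE (lt0n_neq0 i_gt0)) le_ik.
Qed.

End Positions.

Hypothesis tp_perm : is_perm_seq tp.

Lemma mem_tp x : (x \in tp) = (0 < x <= k).
Proof. by rewrite (perm_mem tp_perm) mem_iota; apply/idP/idP; lia. Qed.

Lemma uniq_tp : uniq tp.
Proof. by rewrite (perm_uniq tp_perm) iota_uniq. Qed.

Lemma index_tp_lt x : 0 < x <= k -> index x tp < k.
Proof. by rewrite index_mem mem_tp. Qed.

Section Ranks.

Variable nu : seq nat.
Hypothesis occ : occurrence nu.

Lemma values_tp_lt x y : 0 < x -> x < y <= k ->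
  nth 0 (values nu) (index x tp) < nth 0 (values nu) (index y tp).
Proof.
case: occ => _ _ _ iso x_gt0 /andP[lt_xy le_yk].
by rewrite iso ?index_tp_lt ?nth_index ?mem_tp //; lia.
Qed.

Lemma sort_values :
  sort leq (values nu) = [seq nth 0 (values nu) (index r tp) | r <- iota 1 k].
Proof.
apply: (sorted_eq leq_trans anti_leq); first exact: (sort_sorted leq_total).
  apply/(sortedP 0) => i; rewrite size_map size_iota => lt_ik.
  rewrite !(nth_map 0 0 (fun r => nth 0 (values nu) (index r tp))) ?size_iota;
    try lia.
  by rewrite !nth_iota; try lia; apply/ltnW/values_tp_lt; lia.
have index_tp : [seq index r tp | r <- tp] = iota 0 k.
  apply: (@eq_from_nth _ 0) => [|i]; rewrite size_map ?size_iota // => lt_ik.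
  by rewrite (nth_map 0) // index_uniq ?uniq_tp // nth_iota.
rewrite perm_sort (map_comp (nth 0 (values nu)) (index^~ tp)).
rewrite -{1}(mkseq_nth 0 (values nu)) /mkseq (size_values occ) -index_tp.
by do 2 apply: perm_map.
Qed.

Lemma row_occ r : 0 < r <= k -> row nu r = nth 0 (values nu) (index r tp).
Proof.
move=> /andP[r_gt0 le_rk].
rewrite /row nth_frame size_sort (size_values occ) (negbTE (lt0n_neq0 r_gt0)) le_rk.
rewrite sort_values (nth_map 0 0 (fun r => nth 0 (values nu) (index r tp)));
  by rewrite ?size_iota ?nth_iota; try lia; rewrite add1n prednK.
Qed.

Lemma row_lt r r' : 0 < r -> r < r' <= k -> row nu r < row nu r'.
Proof.
by move=> r_gt0 /andP[lt_rr' le_r'k]; rewrite !row_occ ?values_tp_lt ?lt_rr'; lia.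
Qed.

End Ranks.
End Occurrence.

Section RaiseMax.

Variables (pi tp : seq nat) (C : seq (nat * nat)) (a : nat).
Local Notation N := (size pi).
Local Notation k := (size tp).

Hypotheses (pi_uniq : uniq pi) (avoid231 : mesh_avoids pi p231 [::]).
Hypothesis tp_perm : is_perm_seq tp.
Hypotheses (tp_a : nth 0 tp a = k) (a_lt : a.+1 < k).

Lemma index_max : index k tp = a.
Proof. by rewrite -{1}tp_a index_uniq ?(uniq_tp tp_perm) // ltnW. Qed.

Section Raise.

(* The point at position [y] of box (a, k) takes over the role of k. *)
Variables (nu : seq nat) (y : nat).
Hypothesis occ : occurrence pi tp nu.
Hypothesis y_box : in_box pi nu (a, k) y.
Local Notation nu' := (set_nth 0 nu a y).
Local Notation vals := (nth 0 (values pi nu)).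
Local Notation w := (nth 0 pi y.-1).

Lemma row_max : row pi nu k = vals a.
Proof. by rewrite (row_occ tp_perm occ) // ?index_max //; lia. Qed.

Lemma values_lt_max b : b < k -> b != a -> vals b < vals a.
Proof.
case: occ => _ _ _ iso lt_bk ne_ba; rewrite iso ?tp_a //; last lia.
have /andP[_ le_bk] : 0 < nth 0 tp b <= k by rewrite -(mem_tp tp_perm) mem_nth.
rewrite ltn_neqAle le_bk andbT -{1}tp_a nth_uniq ?(uniq_tp tp_perm) //.
exact: ltnW.
Qed.

Lemma raised_bounds : [/\ col pi nu a < y, y < nth 0 nu a & vals a < w].
Proof.
move: y_box; rewrite /in_box /= (col_occ occ (i := a.+1)) ?row_max /= ?(ltnW a_lt) //.
by case/andP=> /andP[-> ->] /andP[-> _].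
Qed.

Lemma values_raise b : b < k ->
  nth 0 (values pi nu') b = if b == a then w else vals b.
Proof.
case: occ => sz _ _ _ lt_bk.
rewrite (nth_map 0) ?size_set_nth ?sz; last lia.
by rewrite nth_set_nth /=; case: eqP => // _; rewrite (nth_values occ).
Qed.

Lemma raise_occurrence : occurrence pi tp nu'.
Proof.
have [gt_y lt_y lt_w] := raised_bounds.
case: (occ) => sz _ _ iso.
have sz' : size nu' = k by rewrite size_set_nth sz; lia.
split=> //.
- apply/(sortedP 0) => i; rewrite sz' => lt_ik; rewrite !nth_set_nth /=.
  case: eqP => [->|ne_ia].
    by rewrite ifN_eq; [have := occ_lt occ (ltnSn a) | ]; lia.
  case: eqP => [eq_ia|_]; last by apply: (occ_lt occ); lia.
  by move: gt_y; rewrite -eq_ia (col_occ occ) /=; lia.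
- apply/(all_nthP 0) => b; rewrite sz' => lt_bk; rewrite nth_set_nth /=.
  case: eqP => _; last exact: (occ_bound occ lt_bk).
  by have := occ_bound occ (ltnW a_lt); lia.
- move=> b b' lt_bk lt_b'k; rewrite !values_raise // -iso //.
  have [-> | ne_ba] := eqVneq b a; have [-> | ne_b'a] := eqVneq b' a.
  + by rewrite !ltnn.
  + by have := values_lt_max lt_b'k ne_b'a => lt_b'a; apply/idP/idP; lia.
  + by have := values_lt_max lt_bk ne_ba => lt_ba; apply/idP/idP; lia.
  + by [].
Qed.

Lemma col_raise i : col pi nu' i = if i == a.+1 then y else col pi nu i.
Proof.
case: occ => sz _ _ _.
rewrite /col !nth_frame size_set_nth sz (maxn_idPr (ltnW a_lt)) nth_set_nth /=.
case: i => [|i] //=; rewrite !eqSS.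
by have [->|//] := eqVneq i a; rewrite (ltnW a_lt).
Qed.

Lemma row_raise r : row pi nu' r = if r == k then w else row pi nu r.
Proof.
have occ' := raise_occurrence.
have [r_in | r_out] := boolP (0 < r <= k); last first.
  rewrite ifN_eq; last by apply: contraNneq r_out => ->; lia.
  rewrite /row !nth_frame !size_sort (size_values occ) (size_values occ').
  by case: r r_out => [|r] //= /negbTE ->.
rewrite (row_occ tp_perm occ') // (row_occ tp_perm occ) //.
rewrite values_raise ?(index_tp_lt tp_perm) //; congr (if _ then _ else _).
have r_tp : r \in tp by rewrite (mem_tp tp_perm).
by apply/eqP/eqP => [eq_ra|->]; rewrite -?index_max // -tp_a -eq_ra nth_index.
Qed.

Hypothesis y_max :
  forall j, 0 < j <= N -> in_box pi nu (a, k) j -> nth 0 pi j.-1 <= w.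

Lemma raised_top_box_empty j : 0 < j <= N -> ~~ in_box pi nu' (a, k) j.
Proof.
move=> j_in; apply/negP; rewrite /in_box /= !col_raise !row_raise.
rewrite !eqxx (ltn_eqF (ltnSn a)) (gtn_eqF (ltnSn k)).
case/andP=> /andP[gt_j lt_j] /andP[gt_u lt_u].
have [_ lt_y lt_w] := raised_bounds.
have box_j : in_box pi nu (a, k) j.
  rewrite /in_box /= gt_j lt_u (col_occ occ (i := a.+1)) ?(ltnW a_lt) //=.
  rewrite row_max andbT.
  by apply/andP; split; lia.
by have := y_max j_in box_j; lia.
Qed.

Lemma in_box_raise_other c r j : c != a.+1 -> r != k.-1 ->
  in_box pi nu' (c, r) j -> in_box pi nu (c, r) j.
Proof.
move=> ne_c ne_r; rewrite /in_box /= !col_raise !row_raise (negbTE ne_c).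
rewrite (_ : (r.+1 == k) = false); last by apply/eqP; lia.
case/andP=> /andP[gt_j lt_j] /andP[gt_u lt_u]; rewrite gt_j lt_u /= andbT.
have [_ lt_y lt_w] := raised_bounds.
apply/andP; split.
  move: lt_j; case: eqP => [[->]|_] //.
  by rewrite (col_occ occ (i := a.+1)) ?(ltnW a_lt) //=; lia.
by move: gt_u; case: eqP => [->|_] //; rewrite row_max; lia.
Qed.

Lemma in_box_raise_col_succ r j : nth 0 tp a.+1 <= r -> r.+1 < k ->
  in_box pi nu' (a.+1, r) j -> in_box pi nu (a.+1, r) j.
Proof.
move=> le_r lt_r; rewrite /in_box /= !col_raise !row_raise eqxx.
rewrite (gtn_eqF (ltnSn a.+1)) (ltn_eqF (ltnW lt_r)) (ltn_eqF lt_r).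
case/andP=> /andP[gt_j lt_j] /andP[gt_u lt_u]; rewrite lt_j gt_u lt_u !andbT.
have [_ lt_y _] := raised_bounds.
have lt_a1 : nth 0 nu a < nth 0 nu a.+1 := occ_lt occ (ltnSn a) a_lt.
have tp_a1 : 0 < nth 0 tp a.+1 <= k by rewrite -(mem_tp tp_perm) mem_nth.
have lt_u_max : nth 0 pi j.-1 < vals a.
  rewrite -row_max; apply: (ltn_trans lt_u); apply: (row_lt tp_perm occ); lia.
have gt_u_a1 : vals a.+1 < nth 0 pi j.-1.
  have row_a1 : row pi nu (nth 0 tp a.+1) = vals a.+1.
    by rewrite (row_occ tp_perm occ) // index_uniq ?(uniq_tp tp_perm).
  rewrite -row_a1; apply: leq_ltn_trans gt_u.
  have [<- // | ne_r] := eqVneq (nth 0 tp a.+1) r.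
  by apply/ltnW/(row_lt tp_perm occ); lia.
rewrite (col_occ occ (i := a.+1)) ?(ltnW a_lt) //=.
case: (ltngtP j (nth 0 nu a)) => [lt_ja | // | eq_ja].
- case: avoid231.
  apply: (contains_231 (p1 := j) (p2 := nth 0 nu a) (p3 := nth 0 nu a.+1)).
  + by apply/andP; split; lia.
  + by rewrite lt_a1; case/andP: (occ_bound occ a_lt).
  + by rewrite -!(nth_values occ) ?gt_u_a1 ?lt_u_max ?(ltnW a_lt).
- by move: lt_u_max; rewrite eq_ja -(nth_values occ) ?ltnn ?(ltnW a_lt).
Qed.

Lemma in_box_raise_row_pred c j : a.+2 <= c -> c < k -> 0 < j <= N ->
  in_box pi nu' (c, k.-1) j -> in_box pi nu (c, k.-1) j.
Proof.
move=> le_c lt_c j_in.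
have lt_pk : k.-1 < k by rewrite ltn_predL; lia.
rewrite /in_box /= !col_raise !row_raise prednK ?eqxx; last lia.
rewrite (gtn_eqF le_c) (gtn_eqF (leqW le_c)) (ltn_eqF lt_pk).
case/andP=> /andP[gt_j lt_j] /andP[gt_u _]; rewrite gt_j lt_j gt_u row_max /=.
rewrite (col_occ occ (i := c)) ?(col_occ occ (i := c.+1)) /= in gt_j lt_j; try lia.
have lt_ac : nth 0 nu a < nth 0 nu c.-1 by apply: (occ_lt occ); lia.
have /andP[_ le_cN] := occ_bound occ lt_c.
have vals_c := values_lt_max lt_c (negbT (gtn_eqF (ltnW le_c))).
case: (ltngtP (nth 0 pi j.-1) (vals a)) => [// | gt_ua | eq_ua].
- case: avoid231.
  apply: (contains_231 (p1 := nth 0 nu a) (p2 := j) (p3 := nth 0 nu c)).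
  + by have /andP[-> _] := occ_bound occ (ltnW a_lt); lia.
  + by rewrite lt_j.
  + by rewrite -!(nth_values occ) ?gt_ua ?vals_c ?(ltnW a_lt).
- have /andP[nua_gt0 nua_le] := occ_bound occ (ltnW a_lt).
  have [lt_jN lt_nuaN] : j.-1 < N /\ (nth 0 nu a).-1 < N by lia.
  move/eqP: eq_ua; rewrite (nth_values occ) ?(ltnW a_lt) //.
  by rewrite (nth_uniq 0 lt_jN lt_nuaN pi_uniq); lia.
Qed.

End Raise.

Hypothesis col_succ : forall r, (a.+1, r) \in C -> nth 0 tp a.+1 <= r /\ r.+1 < k.
Hypothesis row_pred : forall c, (c, k.-1) \in C -> a.+2 <= c /\ c < k.

Lemma mesh_contains_shade_top_box :
  mesh_contains pi tp [seq ab <- C | ab != (a, k)] -> mesh_contains pi tp C.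
Proof.
case/mesh_containsP => nu occ boxes.
have boxes' ab : ab \in C -> ab != (a, k) ->
    forall j, 0 < j <= N -> ~~ in_box pi nu ab j.
  by move=> ab_C ne; apply: boxes; rewrite mem_filter ne.
have [top_empty | ] := boolP [forall j : 'I_N.+1, ~~ in_box pi nu (a, k) j].
  apply/mesh_containsP; exists nu => // ab ab_C j j_in.
  have [-> | ne] := eqVneq ab (a, k); last exact: boxes'.
  by apply: (forallP top_empty (Ordinal (_ : j < N.+1))); lia.
rewrite negb_forall => /existsP[j0]; rewrite negbK => box_j0.
case: (@arg_maxnP _ j0 (fun j : 'I_N.+1 => in_box pi nu (a, k) j)
         (fun j : 'I_N.+1 => nth 0 pi j.-1) box_j0) => y box_y y_max.
apply/mesh_containsP; exists (set_nth 0 nu a y); first exact: raise_occurrence.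
move=> [c r] cr_C j j_in.
have [[-> ->] | ne] := eqVneq (c, r) (a, k).
  apply: raised_top_box_empty => // j' j'_in.
  by apply: (y_max (Ordinal (_ : j' < N.+1))); lia.
apply: contraNN (boxes' _ cr_C ne j j_in) => box'.
have [eq_c | ne_c] := eqVneq c a.+1.
  move: cr_C box'; rewrite eq_c => /col_succ[le_r lt_r].
  exact: in_box_raise_col_succ.
have [eq_r | ne_r] := eqVneq r k.-1.
  move: cr_C box'; rewrite eq_r => /row_pred[le_c lt_c].
  exact: in_box_raise_row_pred.
exact: (in_box_raise_other occ box_y ne_c ne_r box').
Qed.

End RaiseMax.

Lemma is_perm_tau P : is_perm_seq (tau P).
Proof. by rewrite /is_perm_seq size_preorder perm_preorder. Qed.

Lemma mem_shadeC P e j c r : (c, r) \in shadeC P e j ->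
  c = index j (tau P) /\
  (r \in BRm P j \/
   [/\ j != troot P, e j &
       exists s o, subP P j = Some (s, o) /\ (r = o \/ r = o + bsize s)]).
Proof.
rewrite /shadeC mem_cat => /orP[/mapP[m m_in [-> ->]] | ]; first by split=> //; left.
case: ifP => // /andP[ne_root e_j]; case found: (subP P j) => [[s o]|] //.
rewrite !inE => /orP[] /eqP[-> ->]; split=> //; right; split=> //; exists s, o.
  by split=> //; left.
by split=> //; right.
Qed.

Lemma mem_meshC P e c r : (c, r) \in meshC P e ->
  c < bsize P /\ (c, r) \in shadeC P e (nth 0 (tau P) c).
Proof.
rewrite /meshC => /flatten_mapP[j]; rewrite mem_iota => j_in cr_in.
have [c_eq _] := mem_shadeC cr_in; subst c.
have j_tau : j \in tau P by rewrite mem_preorder; lia.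
by rewrite (nth_index 0 j_tau); split=> //; rewrite -(size_preorder P 0) index_mem.
Qed.

Section FriendlyPattern.

Variables (P : btree) (e : nat -> bool).
Hypothesis friendly_Pe : friendly P e.
Local Notation k := (bsize P).
Local Notation tp := (tau P).
Local Notation a := (index k tp).

Lemma friendly_max_node : exists ll lr o,
  [/\ subP P k = Some (BNode (BNode ll lr) BLeaf, o),
      subP P (nth 0 tp a.+1) = Some (BNode ll lr, o),
      o + bsize (BNode ll lr) = k.-1 & a.+1 < k].
Proof.
case: friendly_Pe => [[/andP[/andP[k_gt0 _] _] cL_k] _ _].
have [ls [o [X [found pre]]]] := find_sub_max 0 k_gt0; rewrite add0n in found.
have [_ _ [_ [_ [[<- _] k_eq]]]] := find_subP found.
move: cL_k; rewrite /cL /subP found.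
case: ls found pre k_eq => [|ll lr] // found pre k_eq _.
set c := o + bsize ll + 1.
have tau_eq : tp = X ++ k :: c :: preorder ll o ++ preorder lr c.
  by rewrite /tau pre [in RHS]k_eq /= cats0.
have k_X : k \notin X.
  move: (uniq_preorder P 0); rewrite -/tp tau_eq cat_uniq => /and3P[_ /hasPn/(_ k)].
  by rewrite inE eqxx => /implyP.
have a_eq : a = size X by rewrite tau_eq index_cat (negbTE k_X) /= eqxx addn0.
exists ll, lr, o; split.
- by [].
- rewrite a_eq tau_eq nth_cat ltnNge leqnSn subSnn /subP (find_sub_trans found).
    by rewrite find_sub_left ?find_sub_root //= -/c; lia.
  by rewrite /c /=; lia.
- lia.
- by rewrite a_eq -(size_preorder P 0) -/tp tau_eq size_cat /=; lia.
Qed.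

Lemma friendly_e_left_child : e k -> e (nth 0 tp a.+1) = false.
Proof.
move=> e_k; have [ll [lr [o [node_k node_c _ _]]]] := friendly_max_node.
case: friendly_Pe => _ _ /(_ e_k); apply.
have [_ _ [_ [_ [[<- _] ->]]]] := find_subP node_c.
by rewrite /cL node_k.
Qed.

Lemma pred_max_notin_BRm j : k.-1 \notin BRm P j.
Proof.
have [ll [lr [o [_ node_c sz_c _]]]] := friendly_max_node.
have [l1 [o1 [_ [max_c _]]]] := find_sub_max o (isT : 0 < bsize (BNode ll lr)).
have node_pk : find_sub P 0 k.-1 = Some (BNode l1 BLeaf, o1).
  rewrite (find_sub_trans node_c) -sz_c //.
  by apply/andP; split; rewrite ?[bsize _]/=; lia.
rewrite /BRm /BR; case node_j: (subP P j) => [[s o2]|] //.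
have [_ _ [sl [sr [s_eq _]]]] := find_subP node_j; subst s.
apply/negP => /find_sub_rbranch[lt_pk [l' [rl [rr [o' node_in_s]]]]].
have [_ le_s [_ [_ [[<- _] pk_eq]]]] := find_subP node_in_s.
have pk_in : o2 < k.-1 <= o2 + bsize (BNode sl sr).
  by rewrite pk_eq; move: le_s => /=; lia.
by move: (find_sub_trans node_j pk_in); rewrite node_pk node_in_s.
Qed.

Lemma friendly_col_succ r : e k -> (a.+1, r) \in meshC P e ->
  nth 0 tp a.+1 <= r /\ r.+1 < k.
Proof.
move=> e_k /mem_meshC[_ /mem_shadeC[_ [in_BR | [_ e_c _]]]]; last first.
  by rewrite friendly_e_left_child in e_c.
have [ll [lr [o [_ node_c sz_c _]]]] := friendly_max_node.
have [_ _ [l0 [r0 [[<- _] ->]]]] := find_subP node_c.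
move: in_BR; rewrite /BRm /BR node_c.
case/find_sub_rbranch => lt_r [l' [rl [rr [o' node_r]]]].
have [_ le_r [_ [_ [[<- _] r_eq]]]] := find_subP node_r.
by rewrite /= in le_r sz_c; split; lia.
Qed.

Lemma friendly_row_pred c : e k -> (c, k.-1) \in meshC P e -> a.+2 <= c /\ c < k.
Proof.
move=> e_k /mem_meshC[lt_ck /mem_shadeC[c_eq [in_BR | [_ e_j [s [o2 [node_j end_eq]]]]]]].
  by rewrite (negbTE (pred_max_notin_BRm _)) in in_BR.
have [ll [lr [o [node_k _ sz_c _]]]] := friendly_max_node.
have [_ le_s [l [r [s_eq j_eq]]]] := find_subP node_j; subst s.
case: end_eq => [o2_eq | end_eq].
  have j_k : nth 0 tp c = k by rewrite /= in le_s; lia.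
  by move: node_j; rewrite j_k node_k => -[_ o_eq]; rewrite /= in sz_c; lia.
have := index_preorder_max node_j; rewrite add0n -/tp -c_eq.
move=> /(_ (esym end_eq)) lt_ac.
split=> //; rewrite ltn_neqAle lt_ac andbT; apply: contraTneq e_j => c_a1.
by rewrite -c_a1 friendly_e_left_child.
Qed.

Lemma friendly_top_box : ~~ e k -> (a, k) \notin meshC P e.
Proof.
have [ll [lr [o [node_k _ _ lt_ak]]]] := friendly_max_node.
have k_tp : k \in tp by rewrite mem_preorder; lia.
move=> ne_k; apply/negP => /mem_meshC[_]; rewrite nth_index //.
case/mem_shadeC => _ [in_BR | [_ e_k _]]; last by rewrite e_k in ne_k.
by move: in_BR; rewrite /BRm /BR node_k.
Qed.

End FriendlyPattern.

Theorem lemma9 (k : nat) (P : btree) (e : nat -> bool) :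
  bsize P = k -> friendly P e ->
  forall (n : nat) (pi : seq nat),
    in_Sn_231 n (tau P) (meshC P e) pi <-> in_Sn_231 n (tau P) (meshC_minus P e) pi.
Proof.
move=> _ friendly_Pe n pi.
have size_tau : size (tau P) = bsize P := size_preorder P 0.
have sub_minus : {subset meshC_minus P e <= meshC P e}.
  by move=> ab; rewrite mem_filter => /andP[].
suff raise : uniq pi -> mesh_avoids pi p231 [::] ->
    mesh_contains pi (tau P) (meshC_minus P e) -> mesh_contains pi (tau P) (meshC P e).
  split=> -[pi_perm [avoid231 avoid]]; do 2!split=> //; apply: contra_not avoid.
    by apply: raise => //; rewrite (perm_uniq pi_perm) iota_uniq.
  exact: mesh_contains_sub.
move=> pi_uniq avoid231; case e_k: (e (bsize P)).
  have [_ [_ [_ [_ _ _ a_lt]]]] := friendly_max_node friendly_Pe.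
  rewrite /meshC_minus -size_tau; apply: mesh_contains_shade_top_box => //.
  - exact: is_perm_tau.
  - by rewrite size_tau nth_index // mem_preorder; lia.
  - by rewrite size_tau.
  - by move=> r; rewrite size_tau => /(friendly_col_succ friendly_Pe e_k).
  - by move=> c; rewrite size_tau => /(friendly_row_pred friendly_Pe e_k).
apply: mesh_contains_sub => ab ab_C; rewrite mem_filter ab_C andbT.
by apply: contraTneq ab_C => ->; apply: (friendly_top_box friendly_Pe); rewrite e_k.
Qed.
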